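(* Let $S$ be an additively cancellative centrally essential semiring. Then every complemented idempotent of $S$ is central, i.e. if $e,f\in S$ satisfy $e^2=e$, $f^2=f$ and $e+f=1$, then $e\in C(S)$.
   Context: A semiring is a set $S$ with two binary operations $+$ and $\cdot$ such that $(S,+)$ is a commutative monoid with neutral element $0$, $(S,\cdot)$ is a monoid with identity $1$, multiplication distributes over addition on both sides, and $0s=s0=0$ for all $s\in S$. The center is $C(S)=\{s\in S: ss'=s's \text{ for all } s'\in S\}$. $S$ is centrally essential if for every non-zero $x\in S$ there exist non-zero $y,z\in C(S)$ with $xy=z$. $S$ is additively cancellative if $x+z=y+z$ implies $x=y$. An idempotent $e$ is complemented if there is an idempotent $f\in S$ with $e+f=1$. *)

From HB Require Import structures.
From mathcomp Require Import all_boot all_algebra.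
Set Implicit Arguments. Unset Strict Implicit. Unset Printing Implicit Defensive.
Import GRing.Theory.
Local Open Scope ring_scope.

(* Semirings: MathComp's pzSemiRingType (commutative additive monoid, monoid
   multiplication, two-sided distributivity, 0 absorbing; 1 = 0 allowed). *)

Definition central (S : pzSemiRingType) (s : S) : Prop :=
  forall s' : S, s * s' = s' * s.

Definition centrally_essential (S : pzSemiRingType) : Prop :=
  forall x : S, x <> 0 ->
    exists y z : S, [/\ central y, central z, y <> 0, z <> 0 & x * y = z].

Definition add_cancellative (S : pzSemiRingType) : Prop :=
  forall x y z : S, x + z = y + z -> x = y.

From mathcomp Require Import all_boot all_algebra.
Local Open Scope ring_scope.
Import GRing.Theory.
Set Implicit Arguments. Unset Strict Implicit. Unset Printing Implicit Defensive.

(* With [e + f = 1] and [e], [f] idempotent, cancellativity makes [e] and [f]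
   orthogonal, so every corner [e s f] satisfies [e (e s f) = e s f] and
   [(e s f) e = 0].  In a centrally essential semiring such an element must
   vanish: a nonzero central multiple [z] of it would satisfy
   [z = e z = z e = 0].  Hence [e s = e s e = s e]. *)

Section ComplementedIdempotents.

Variable S : pzSemiRingType.

Lemma compl_idem_mulr0 (e f : S) :
  add_cancellative S -> e * e = e -> e + f = 1 -> e * f = 0.
Proof.
move=> hcanc he hef; apply: (hcanc _ _ e).
by rewrite add0r -{2}he addrC -mulrDr hef mulr1.
Qed.

Lemma compl_idem_mul0r (e f : S) :
  add_cancellative S -> e * e = e -> e + f = 1 -> f * e = 0.
Proof.
move=> hcanc he hef; apply: (hcanc _ _ e).
by rewrite add0r -{2}he -mulrDl addrC hef mul1r.
Qed.

Lemma centrally_essential_fixed_annihilated (e x : S) :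
  centrally_essential S -> e * x = x -> x * e = 0 -> x = 0.
Proof.
move=> hess ex xe; case: (eqVneq x 0) => [//|/eqP x_neq0].
have [y [z [cy cz _ z_neq0 xy]]] := hess x x_neq0.
have ez : e * z = z by rewrite -xy mulrA ex.
have ze : z * e = 0 by rewrite -xy -mulrA cy mulrA xe mul0r.
by case: z_neq0; rewrite -ez -cz ze.
Qed.

Lemma corner_eq0 (e f s : S) :
  centrally_essential S -> e * e = e -> f * e = 0 -> e * s * f = 0.
Proof.
move=> hess he fe; apply: (centrally_essential_fixed_annihilated (e := e) hess).
  by rewrite !mulrA he.
by rewrite -!mulrA fe !mulr0.
Qed.

Lemma central_corners_eq0 (e f : S) :
  e + f = 1 -> (forall s, e * s * f = 0) -> (forall s, f * s * e = 0) ->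
  central e.
Proof.
move=> hef esf fse s.
have -> : e * s = e * s * e by rewrite -{1}(mulr1 (e * s)) -hef mulrDr esf addr0.
by rewrite -[in RHS](mul1r s) -hef !mulrDl fse addr0.
Qed.

End ComplementedIdempotents.

Theorem proposition2p3 (S : pzSemiRingType)
  (hcanc : add_cancellative S) (hess : centrally_essential S)
  (e f : S) (he : e * e = e) (hf : f * f = f) (hef : e + f = 1) :
  central e.
Proof.
have ef : e * f = 0 by exact: compl_idem_mulr0 he hef.
have fe : f * e = 0 by exact: compl_idem_mul0r he hef.
apply: (central_corners_eq0 hef) => s.
  exact: corner_eq0 hess he fe.
exact: corner_eq0 hess hf ef.
Qed.
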